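(* Let $n\ge 3$ and consider the cycle $C_n$ with an arbitrary initial coloring. In the Majority Model (MM): if $n$ is odd, the process always reaches a stable coloring; if $n$ is even, the process reaches a stable coloring or the blinking configuration. In the Random Majority Model (RMM): if $n$ is odd, the process (almost surely) reaches the all-white or the all-blue coloring; if $n$ is even, the process reaches the all-white coloring, the all-blue coloring, or the blinking configuration.
   Context: A coloring is a map from the nodes to $\{b,w\}$. In MM, all nodes update simultaneously: a node adopts the color strictly more frequent among its neighbors in the previous round and keeps its color in case of a tie. RMM is the same except that in case of a tie the node chooses blue or white independently and uniformly at random. A coloring is stable if one application of the update rule deterministically returns the same coloring. For even $n$, the two alternating colorings are those in which every two adjacent nodes of $C_n$ have different colors; the process is in the blinking configuration when it is in one of them (it then switches between the two forever). *)

From mathcomp Require Import all_boot all_order all_algebra.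
Set Implicit Arguments. Unset Strict Implicit. Unset Printing Implicit Defensive.
Import Order.TTheory GRing.Theory Num.Theory.
Local Open Scope ring_scope.

(* Colors: true = blue (b), false = white (w). *)
Definition coloring (n : nat) := {ffun 'I_n -> bool}.

Definition adj (n : nat) (u v : 'I_n) : bool := (v == ordS u) || (u == ordS v).

Definition nblue n (c : coloring n) (v : 'I_n) : nat :=
  #|[set u | adj v u & c u]|.
Definition nwhite n (c : coloring n) (v : 'I_n) : nat :=
  #|[set u | adj v u & ~~ c u]|.

Definition mm_step n (c : coloring n) : coloring n :=
  [ffun v => if (nwhite c v < nblue c v)%N then true
             else if (nblue c v < nwhite c v)%N then false
             else c v].

Definition mm_stable n (c : coloring n) : bool := mm_step c == c.

Definition alternating n (c : coloring n) : bool :=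
  [forall u, forall v, adj u v ==> (c u != c v)].

Definition all_white n (c : coloring n) : bool := c == [ffun => false].
Definition all_blue n (c : coloring n) : bool := c == [ffun => true].

Definition rmm_node_prob n (c : coloring n) (v : 'I_n) (x : bool) : rat :=
  if (nwhite c v < nblue c v)%N then (x == true)%:R
  else if (nblue c v < nwhite c v)%N then (x == false)%:R
  else 1 / 2.

Definition rmm_trans n (c c' : coloring n) : rat :=
  \prod_(v : 'I_n) rmm_node_prob c v (c' v).

(* Probability that the RMM chain started at c visits S within t steps. *)
Fixpoint rmm_hit n (S : {set coloring n}) (t : nat) (c : coloring n) : rat :=
  match t with
  | 0 => (c \in S)%:R
  | t'.+1 => if c \in S then 1
             else \sum_(c' : coloring n) rmm_trans c c' * rmm_hit S t' c'
  end.

Definition rmm_as_reaches n (S : {set coloring n}) (c : coloring n) : Prop :=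
  forall eps : rat, 0 < eps ->
    exists T : nat, forall t : nat, (T <= t)%N -> 1 - eps < rmm_hit S t c.

(* MM: a node with a neighbour of its own colour keeps its colour, and so does that
   neighbour, so such "settled" nodes stay settled; an unsettled node next to a settled one
   flips and becomes settled. Hence the set of unsettled nodes shrinks until it is empty
   (a stable colouring) or the whole cycle (every node differs from both neighbours: an
   alternating colouring, which forces n to be even).
   RMM: the colour "blue iff some neighbour is blue" is never a strict minority among a
   node's neighbours, so RMM performs this deterministic spreading step with probability at
   least 2^-n. After n spreading steps a colouring is 2-periodic along the cycle, hence
   uniform or alternating, and uniform when n is odd. So every n steps the target set is hit
   with probability at least 2^-(n^2) from any colouring, and the probability of missing it
   decays geometrically. *)

From mathcomp Require Import all_boot all_order all_algebra.
From mathcomp Require Import ring lra.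
Set Implicit Arguments. Unset Strict Implicit. Unset Printing Implicit Defensive.
Import Order.TTheory GRing.Theory Num.Theory.
Local Open Scope ring_scope.

Lemma bernoulli_1sub {R : realDomainType} (q : R) k :
  0 <= q -> q <= 1 -> (1 - q) ^+ k * (1 + k%:R * q) <= 1.
Proof.
move=> q0 q1; elim: k => [|k IH]; first by rewrite expr0 mul0r addr0 mulr1.
have P0 : 0 <= (1 - q) ^+ k by apply: exprn_ge0; lra.
have K0 : 0 <= (k%:R : R) by rewrite ler0n.
have D0 : 0 <= (1 - q) ^+ k * (q * q * (k%:R + 1)).
  by apply: mulr_ge0 => //; apply: mulr_ge0; [apply: mulr_ge0 | lra].
have -> : (1 - q) ^+ k.+1 * (1 + k.+1%:R * q) =
          (1 - q) ^+ k * (1 + k%:R * q) - (1 - q) ^+ k * (q * q * (k%:R + 1)).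
  by rewrite exprSr -natr1; ring.
lra.
Qed.

Lemma exists_expr_1sub_lt {R : archiRealFieldType} (q eps : R) :
  0 < q -> q <= 1 -> 0 < eps -> exists k, (1 - q) ^+ k < eps.
Proof.
(* Take [k > 1 / (eps q)]: by Bernoulli, [(1 - q)^k <= 1 / (1 + k q) < eps]. *)
move=> q0 q1 eps0; have epsq0 : 0 < eps * q by apply: mulr_gt0.
have := archi_boundP (ltW (divr_gt0 ltr01 epsq0)).
set k := Num.Def.archi_bound _; rewrite (ltr_pdivrMr _ _ epsq0) => hk.
exists k; have := bernoulli_1sub k (ltW q0) q1.
have P0 : 0 <= (1 - q) ^+ k by apply: exprn_ge0; lra.
have K0 : 0 <= (k%:R : R) by rewrite ler0n.
have : 0 <= (1 - q) ^+ k * (k%:R * q) by apply: mulr_ge0 => //; apply: mulr_ge0 => //; lra.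
nra.
Qed.

Section RandomMajority.
Context {n : nat}.
Implicit Types (c : coloring n) (v : 'I_n).

Lemma rmm_node_prob_ge0 c v x : 0 <= rmm_node_prob c v x.
Proof. by rewrite /rmm_node_prob; case: ifP => _; [|case: ifP => _]; rewrite ?ler0n //; lra. Qed.

Lemma rmm_node_prob_sum c v : rmm_node_prob c v true + rmm_node_prob c v false = 1.
Proof.
by rewrite /rmm_node_prob; case: ifP => _; [|case: ifP => _]; rewrite /= ?addr0 ?add0r //; lra.
Qed.

Lemma rmm_trans_ge0 c c' : 0 <= rmm_trans c c'.
Proof. by apply: prodr_ge0 => v _; apply: rmm_node_prob_ge0. Qed.

Lemma rmm_trans_sum c : \sum_c' rmm_trans c c' = 1.
Proof.
rewrite /rmm_trans -bigA_distr_bigA /= big1 // => v _.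
by rewrite big_bool /= rmm_node_prob_sum.
Qed.

Lemma rmm_trans_le1 c c' : rmm_trans c c' <= 1.
Proof.
rewrite -(rmm_trans_sum c) (bigD1 c') //= lerDl.
by apply: sumr_ge0 => c'' _; apply: rmm_trans_ge0.
Qed.

Lemma rmm_trans_ge_half c c' :
  (forall v, 1 / 2 <= rmm_node_prob c v (c' v)) -> (1 / 2) ^+ n <= rmm_trans c c'.
Proof.
move=> half; rewrite -[n in _ ^+ n]card_ord -prodr_const.
by apply: ler_prod => v _; rewrite half andbT; lra.
Qed.

Variable S : {set coloring n}.
Local Notation hit := (rmm_hit S).

Lemma rmm_hit_in t c : c \in S -> hit t c = 1.
Proof. by case: t => [|t] /= ->. Qed.

Lemma rmm_hit_ge0 t c : 0 <= hit t c.
Proof.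
elim: t c => [|t IH] c /=; first by rewrite ler0n.
case: (c \in S) => //; apply: sumr_ge0 => c' _.
by apply: mulr_ge0; [apply: rmm_trans_ge0 | apply: IH].
Qed.

Lemma rmm_hit_leS t c : hit t c <= hit t.+1 c.
Proof.
elim: t c => [|t IH] c /=; case: (c \in S) => //.
  by apply: sumr_ge0 => c' _; apply: mulr_ge0; [apply: rmm_trans_ge0 | apply: (rmm_hit_ge0 0)].
by apply: ler_sum => c' _; apply: ler_wpM2l; [apply: rmm_trans_ge0 | apply: IH].
Qed.

Lemma rmm_hit_leD t s c : hit t c <= hit (s + t) c.
Proof. by elim: s => [|s IH] //; apply: le_trans IH (rmm_hit_leS _ _). Qed.

Lemma rmm_miss_succ c t : c \notin S ->
  1 - hit t.+1 c = \sum_c' rmm_trans c c' * (1 - hit t c').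
Proof.
move=> /negPf /= ->; rewrite -[1 in LHS](rmm_trans_sum c) -sumrB.
by apply: eq_bigr => c' _; rewrite mulrBr mulr1.
Qed.

(* Split the average at one favoured successor [c1]; the others contribute at most [M]. *)
Lemma rmm_miss_succ_le c c1 t M M1 : c \notin S ->
  (forall c', 1 - hit t c' <= M) -> 1 - hit t c1 <= M1 ->
  1 - hit t.+1 c <= M - rmm_trans c c1 * (M - M1).
Proof.
move=> cS missM miss1; rewrite rmm_miss_succ // (bigD1 c1) //=.
have rest : \sum_(c' | c' != c1) rmm_trans c c' * (1 - hit t c') <= (1 - rmm_trans c c1) * M.
  have -> : 1 - rmm_trans c c1 = \sum_(c' | c' != c1) rmm_trans c c'.
    by rewrite -(rmm_trans_sum c) (bigD1 c1) //= addrC addrK.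
  rewrite big_distrl /=.
  by apply: ler_sum => c' _; apply: ler_wpM2l; [apply: rmm_trans_ge0 | apply: missM].
have := ler_wpM2l (rmm_trans_ge0 c c1) miss1; lra.
Qed.

Variables (f : coloring n -> coloring n) (p : rat).
Hypothesis p_gt0 : 0 < p.
Hypothesis f_likely : forall c, p <= rmm_trans c (f c).

Let p_le1 : p <= 1.
Proof. exact: le_trans (f_likely [ffun => false]) (rmm_trans_le1 _ _). Qed.

Lemma rmm_miss_iter_le j t M : 0 <= M -> (forall c, 1 - hit t c <= M) ->
  forall c, iter j f c \in S -> 1 - hit (j + t) c <= M * (1 - p ^+ j).
Proof.
move=> M0 missM; elim: j => [|j IH] c jS.
  by rewrite add0n rmm_hit_in // subrr mulr0.
have pj1 : p ^+ j.+1 <= 1 by rewrite exprn_ile1 ?p_le1 ?ltW.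
have [cS|cS] := boolP (c \in S).
  by rewrite rmm_hit_in // subrr; apply: mulr_ge0; rewrite ?subr_ge0.
have missM' c' : 1 - hit (j + t) c' <= M.
  by apply: le_trans (missM c'); rewrite lerD2l lerN2 rmm_hit_leD.
have miss_fc : 1 - hit (j + t) (f c) <= M * (1 - p ^+ j) by apply: IH; rewrite -iterSr.
apply: le_trans (rmm_miss_succ_le cS missM' miss_fc) _; rewrite exprS.
have : 0 <= M * p ^+ j by apply: mulr_ge0 => //; apply: exprn_ge0; apply: ltW.
have := f_likely c; nra.
Qed.

Variable k : nat.
Hypothesis iter_f_in : forall c, iter k f c \in S.

Lemma rmm_miss_geometric i c : 1 - hit (i * k) c <= (1 - p ^+ k) ^+ i.
Proof.
elim: i c => [|i IH] c; first by rewrite mul0n expr0 lerBlDr lerDl rmm_hit_ge0.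
rewrite mulSn exprSr; apply: rmm_miss_iter_le => //.
by rewrite exprn_ge0 // subr_ge0 exprn_ile1 ?p_le1 ?ltW.
Qed.

Lemma rmm_as_reaches_of_path c : rmm_as_reaches S c.
Proof.
move=> eps eps0.
have [i small] := exists_expr_1sub_lt (exprn_gt0 k p_gt0) (exprn_ile1 k (ltW p_gt0) p_le1) eps0.
exists (i * k)%N => t /subnK <-.
have := rmm_miss_geometric i c; have := rmm_hit_leD (i * k) (t - i * k) c; lra.
Qed.

End RandomMajority.

Section Cycle.
Context {m : nat}.
Local Notation N := m.+3.
Implicit Types (c : coloring N) (u v : 'I_N).

(* For [N = m.+3], ['Z_N] is convertible to ['I_N], which gives the ring structure used below. *)
Lemma ordSE v : ordS v = v + 1.
Proof. by rewrite -(add_Zp_1 (v : 'Z_N)). Qed.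

Lemma adjE u v : adj u v = (v == u + 1) || (v == u - 1).
Proof.
rewrite /adj !ordSE; congr (_ || _).
by apply/eqP/eqP => [->|->]; [rewrite addrK | rewrite subrK].
Qed.

Lemma natr_order : (N%:R : 'I_N) = 0.
Proof. by apply/val_inj; rewrite Zp_nat /= modnn. Qed.

Lemma addr1_neq_subr1 v : v + 1 != v - 1.
Proof.
apply/eqP => /(congr1 (fun x => x - (v - 1))); rewrite subrr.
have -> : v + 1 - (v - 1) = 2%:R by ring.
by move/(congr1 val); rewrite Zp_nat /= modn_small.
Qed.

Lemma card_adj_color (P : pred bool) c v :
  #|[set u | adj v u & P (c u)]| = addn (P (c (v + 1))) (P (c (v - 1))).
Proof.
set s := [seq u <- [:: v + 1; v - 1] | P (c u)].
have uniq_s : uniq s by rewrite filter_uniq //= inE addr1_neq_subr1.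
have -> : #|[set u | adj v u & P (c u)]| = #|s|.
  by apply: eq_card => u; rewrite inE mem_filter adjE !inE andbC.
by rewrite (card_uniqP uniq_s) size_filter /= addn0.
Qed.

Lemma cycle_ind (P : pred 'I_N) w : (forall v, P v -> P (v + 1)) -> P w -> forall v, P v.
Proof.
move=> PS Pw v; have -> : v = w + (nat_of_ord (v - w))%:R by rewrite natr_Zp addrC subrK.
elim: (nat_of_ord (v - w)) => [|k IH]; first by rewrite addr0.
by rewrite -[k.+1]addn1 natrD addrA; apply: PS.
Qed.

Definition settled c v := (c (v + 1) == c v) || (c (v - 1) == c v).
Definition unsettled c := [set v | ~~ settled c v].

Lemma mm_stepE c v : mm_step c v = if settled c v then c v else ~~ c v.
Proof.
rewrite ffunE /nblue /nwhite (card_adj_color id) (card_adj_color negb) /settled.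
by case: (c (v + 1)); case: (c (v - 1)); case: (c v).
Qed.

Lemma settled_mm_step c v : settled c v -> settled (mm_step c) v.
Proof.
move=> settled_v; have /orP[same|same] := settled_v.
- have settled_succ : settled c (v + 1) by rewrite /settled addrK [c v == _]eq_sym same orbT.
  by rewrite /settled !mm_stepE settled_v settled_succ same.
- have settled_pred : settled c (v - 1) by rewrite /settled subrK [c v == _]eq_sym same.
  by rewrite /settled !mm_stepE settled_v settled_pred same orbT.
Qed.

Lemma settled_mm_step_of_succ c v :
  ~~ settled c v -> settled c (v + 1) -> settled (mm_step c) v.
Proof.
move=> unsettled_v settled_succ; rewrite /settled !mm_stepE (negbTE unsettled_v) settled_succ.
by move: unsettled_v; rewrite /settled; case: (c (v + 1)); case: (c v).
Qed.

Lemma unsettled_mm_step_proper c u w :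
  settled c u -> ~~ settled c w -> unsettled (mm_step c) \proper unsettled c.
Proof.
move=> settled_u unsettled_w.
have [v /andP[unsettled_v settled_succ]] : exists v, ~~ settled c v && settled c (v + 1).
  apply/existsP; apply: contraLR settled_u => /existsPn boundary_free.
  apply: (@cycle_ind [pred x | ~~ settled c x] w) => //= x unsettled_x.
  by move: (boundary_free x); rewrite unsettled_x.
apply/properP; split.
  by apply/subsetP => x; rewrite !inE; apply: contra; apply: settled_mm_step.
by exists v; rewrite !inE ?unsettled_v // settled_mm_step_of_succ.
Qed.

Lemma mm_eventually_uniform c : exists t,
  (forall v, settled (iter t (@mm_step N) c) v) \/ (forall v, ~~ settled (iter t (@mm_step N) c) v).
Proof.
have [k] := ubnP #|unsettled c|; elim: k c => // k IH c lt_k.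
have [/forallP|/forallPn [w unsettled_w]] := boolP [forall v, settled c v].
  by exists 0%N; left.
have [/forallP|/forallPn [u /negPn settled_u]] := boolP [forall v, ~~ settled c v].
  by exists 0%N; right.
have [|t uniform] := IH (mm_step c).
  rewrite ltnS in lt_k; apply: leq_trans lt_k; apply: proper_card.
  exact: unsettled_mm_step_proper settled_u unsettled_w.
by exists t.+1; rewrite iterSr.
Qed.

Lemma mm_stable_of_settled c : (forall v, settled c v) -> mm_stable c.
Proof. by move=> all_settled; apply/eqP/ffunP => v; rewrite mm_stepE all_settled. Qed.

Lemma alternating_of_succ_flips c : (forall v, c (v + 1) != c v) -> alternating c.
Proof.
move=> flips; apply/forallP => u; apply/forallP => v; apply/implyP; rewrite adjE.
case/orP => /eqP ->; first by rewrite eq_sym flips.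
by have := flips (u - 1); rewrite subrK.
Qed.

Lemma mm_eventually_stable_or_alternating c : exists t,
  mm_stable (iter t (@mm_step N) c) \/ alternating (iter t (@mm_step N) c).
Proof.
have [t [all_settled|all_unsettled]] := mm_eventually_uniform c; exists t.
  by left; apply: mm_stable_of_settled.
right; apply: alternating_of_succ_flips => v.
by move: (all_unsettled v); rewrite /settled negb_or => /andP[].
Qed.

Lemma alternating_even c : alternating c -> ~~ odd N.
Proof.
move=> /forallP alt; have flipE v : c (v + 1) = ~~ c v.
  by move: (alt v) => /forallP/(_ (v + 1)); rewrite adjE eqxx; case: (c v); case: (c _).
have flipsE k : c k%:R = odd k (+) c 0.
  elim: k => [|k IH]; first by rewrite addFb.
  by rewrite -[k.+1]addn1 natrD flipE IH addn1 /= addNb.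
by move: (flipsE N); rewrite natr_order; case: (odd N); case: (c 0).
Qed.

Definition spread_blue c : coloring N := [ffun v => c (v + 1) || c (v - 1)].

Lemma iter_spread_blueE k c v :
  iter k spread_blue c v = [exists j : 'I_k.+1, c (v + k%:R - (2 * j)%:R)].
Proof.
elim: k c v => [|k IH] c v /=.
  apply/idP/existsP => [cv|[j]]; first by exists ord0; rewrite subr0 addr0.
  by rewrite ord1 subr0 addr0.
rewrite ffunE !IH; apply/orP/existsP => [[/existsP[j cj]|/existsP[j cj]]|[j cj]].
- exists (widen_ord (leqnSn _) j); move: cj; congr (c _).
  by rewrite -natr1; ring.
- exists (lift ord0 j); move: cj; congr (c _).
  by rewrite /= /bump /= add1n mulnS natrD -natr1 natrD; ring.
- have [lt_jk|le_kj] := ltnP j k.+1.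
    left; apply/existsP; exists (Ordinal lt_jk); move: cj; congr (c _).
    by rewrite -natr1; ring.
  right; apply/existsP; exists ord_max; move: cj; congr (c _).
  have -> : nat_of_ord j = k.+1 by apply/eqP; rewrite eqn_leq le_kj -ltnS ltn_ord.
  by rewrite mulnS -natr1 !natrD; ring.
Qed.

Lemma iter_spread_blue_orderE c v :
  iter N spread_blue c v = [exists x : 'I_N, c (v - 2%:R * x)].
Proof.
rewrite iter_spread_blueE natr_order addr0; apply/existsP/existsP => [[j cj]|[x cx]].
  by exists j%:R; move: cj; rewrite natrM.
by exists (widen_ord (leqnSn _) x); rewrite natrM natr_Zp.
Qed.

Lemma iter_spread_blue_order_period2 c v :
  iter N spread_blue c (v + 2%:R) = iter N spread_blue c v.
Proof.
rewrite !iter_spread_blue_orderE; apply/existsP/existsP => [[x cx]|[x cx]].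
  by exists (x - 1); move: cx; congr (c _); ring.
by exists (x + 1); move: cx; congr (c _); ring.
Qed.

Lemma constant_of_succ_invariant {T : eqType} (g : 'I_N -> T) :
  (forall v, g (v + 1) = g v) -> forall v, g v = g 0.
Proof.
move=> g_succ v; apply/eqP; move: v.
by apply: (@cycle_ind [pred v | g v == g 0] 0) => //= v; rewrite g_succ.
Qed.

(* When [N] is odd, [1 = 2 * (N + 1)/2] in ['I_N]. *)
Lemma succ_invariant_of_period2 {T : Type} (g : 'I_N -> T) : odd N ->
  (forall v, g (v + 2%:R) = g v) -> forall v, g (v + 1) = g v.
Proof.
move=> odd_N g_period2.
have g_even k v : g (v + (2 * k)%:R) = g v.
  elim: k => [|k IH]; first by rewrite muln0 addr0.
  by rewrite mulnS natrD addrA addrAC g_period2 IH.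
move=> v; rewrite -[in RHS](g_even N.+1./2 v); congr (g (v + _)).
have -> : (2 * N.+1./2)%N = N.+1 by rewrite mul2n -[RHS]odd_double_half /=; move: odd_N => /= ->.
by rewrite -[N.+1]addn1 natrD natr_order add0r.
Qed.

Lemma period2_constant_or_flips c : (forall v, c (v + 2%:R) = c v) ->
  (forall v, c v = c 0) \/ (forall v, c (v + 1) != c v).
Proof.
move=> c_period2.
have succ_inv v : (c (v + 1 + 1) == c (v + 1)) = (c (v + 1) == c v).
  by rewrite -addrA -[1 + 1]/(2%:R : 'I_N) c_period2 eq_sym.
have := constant_of_succ_invariant succ_inv; case: (c (0 + 1) == c 0) => same.
  by left; apply: constant_of_succ_invariant => v; apply/eqP; rewrite same.
by right => v; rewrite same.
Qed.

Lemma all_white_or_blue_of_constant c :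
  (forall v, c v = c 0) -> all_white c || all_blue c.
Proof.
move=> const; case c0: (c 0); apply/orP; [right|left].
all: by apply/eqP/ffunP => v; rewrite ffunE const c0.
Qed.

Lemma iter_spread_blue_odd c : odd N ->
  all_white (iter N spread_blue c) || all_blue (iter N spread_blue c).
Proof.
move=> odd_N; apply/all_white_or_blue_of_constant/constant_of_succ_invariant.
exact: succ_invariant_of_period2 odd_N (iter_spread_blue_order_period2 c).
Qed.

Lemma iter_spread_blue_uniform_or_alternating c :
  [|| all_white (iter N spread_blue c), all_blue (iter N spread_blue c)
    | alternating (iter N spread_blue c)].
Proof.
have [const|flips] := period2_constant_or_flips (iter_spread_blue_order_period2 c).
  by rewrite orbA all_white_or_blue_of_constant.
by rewrite alternating_of_succ_flips ?orbT.
Qed.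

Lemma rmm_node_prob_spread_blue c v : 1 / 2 <= rmm_node_prob c v (spread_blue c v).
Proof.
rewrite /rmm_node_prob /nblue /nwhite (card_adj_color id) (card_adj_color negb) ffunE.
by case: (c (v + 1)); case: (c (v - 1)) => /=; rewrite ?lexx //; lra.
Qed.

Lemma rmm_as_reaches_spread_blue (S : {set coloring N}) c :
  (forall c', iter N spread_blue c' \in S) -> rmm_as_reaches S c.
Proof.
move=> spread_in; apply: (rmm_as_reaches_of_path (p := (1 / 2) ^+ N) _ _ spread_in).
  by apply: exprn_gt0; lra.
by move=> c'; apply: rmm_trans_ge_half => v; apply: rmm_node_prob_spread_blue.
Qed.

End Cycle.

Theorem theorem2p7 (n : nat) (hn : (3 <= n)%N) (c0 : coloring n) :
  (odd n -> exists t : nat, mm_stable (iter t (@mm_step n) c0)) /\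
  (~~ odd n -> exists t : nat,
      mm_stable (iter t (@mm_step n) c0) \/ alternating (iter t (@mm_step n) c0)) /\
  (odd n -> rmm_as_reaches [set c | all_white c || all_blue c] c0) /\
  (~~ odd n ->
     rmm_as_reaches [set c | [|| all_white c, all_blue c | alternating c]] c0).
Proof.
case: n hn c0 => [|[|[|m]]] // _ c0.
have [t stable_or_alternating] := mm_eventually_stable_or_alternating c0.
split; [|split; [|split]].
- move=> odd_N; exists t; case: stable_or_alternating => // /alternating_even.
  by rewrite odd_N.
- by exists t.
- move=> odd_N; apply: rmm_as_reaches_spread_blue => c.
  by rewrite inE iter_spread_blue_odd.
- move=> _; apply: rmm_as_reaches_spread_blue => c.
  by rewrite inE iter_spread_blue_uniform_or_alternating.
Qed.
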